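(* In the Setting, suppose that $r=\sqrt{K-\lambda_1}$ and $s=-\sqrt{K-\lambda_1}$. Then $c=m$ and \[ v=\frac{(-s)(n^2-1)}{n+s},\quad k=(-s)n,\quad \lambda=\mu=(-s)(n+s). \]
   Context: Setting: $\Gamma$ is a primitive strongly regular graph with parameters $(v,k,\lambda,\mu)$ (a $k$-regular graph on $v$ vertices, any two adjacent vertices having $\lambda$ and any two distinct non-adjacent vertices having $\mu$ common neighbours; primitive means $\Gamma$ and its complement are connected), with spectrum $k^1, r^f, s^g$ where $k>r>s$ and exponents are multiplicities. $C$ is a coclique in $\Gamma$ of size $c=\frac{vs}{s-k}$. A $K$-regular graph on $V$ vertices, neither complete nor edgeless, is a divisible design graph with parameters $(V,K,\lambda_1,\lambda_2;m,n)$ if its vertex set can be partitioned into $m$ canonical classes of size $n$ such that two distinct vertices in the same class have exactly $\lambda_1$ common neighbours and two vertices in different classes have exactly $\lambda_2$ common neighbours; it is proper unless $m=1$, $n=1$ or $\lambda_1=\lambda_2$. It is assumed that the subgraph $\Delta$ induced on $V(\Gamma)\setminus C$ is a proper divisible design graph with parameters $(V,K,\lambda_1,\lambda_2;m,n)$. *)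

From mathcomp Require Import all_boot all_order all_algebra.
Set Implicit Arguments. Unset Strict Implicit. Unset Printing Implicit Defensive.
Import Order.TTheory GRing.Theory Num.Theory.

Section Graphs.
Variables (T : finType) (e : rel T).

Definition simple_graph : Prop := symmetric e /\ irreflexive e.

Definition common_nbrs (D : {set T}) (x y : T) : nat :=
  #|[set z in D | e x z && e y z]|.

Definition srg (v k lam mu : nat) : Prop :=
  [/\ #|T| = v,
      forall x : T, #|[set y | e x y]| = k,
      forall x y : T, x != y -> e x y -> common_nbrs setT x y = lam
    & forall x y : T, x != y -> ~~ e x y -> common_nbrs setT x y = mu].

Definition compl_rel : rel T := fun x y => (x != y) && ~~ e x y.

Definition primitive : Prop :=
  (forall x y : T, connect e x y) /\ (forall x y : T, connect compl_rel x y).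

Definition adj_mx (R : nzRingType) : 'M[R]_#|T| :=
  \matrix_(i, j) ((e (enum_val i) (enum_val j))%:R)%R.

Definition coclique (C : {set T}) : Prop :=
  forall x y, x \in C -> y \in C -> ~~ e x y.

Definition is_ddg (D : {set T}) (V K l1 l2 m n : nat) : Prop :=
  [/\ #|D| = V,
      forall x, x \in D -> #|[set y in D | e x y]| = K,
      (exists x y, [/\ x \in D, y \in D, x != y & ~~ e x y]) ,
      (exists x y, [/\ x \in D, y \in D & e x y])
    & exists P : {set {set T}},
        [/\ partition P D, #|P| = m,
            forall B, B \in P -> #|B| = n
          & forall x y, x \in D -> y \in D -> x != y ->
              common_nbrs D x y = (if pblock P x == pblock P y then l1 else l2)]].

Definition is_proper_ddg (D : {set T}) (V K l1 l2 m n : nat) : Prop :=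
  [/\ is_ddg D V K l1 l2 m n, m != 1%N, n != 1%N & l1 != l2].

End Graphs.

(* Theorem 8: for a strongly regular graph (v, k, lam, mu) with eigenvalues
   k > a > -a, a = sqrt (K - l1), a coclique C of Hoffman size v a / (k + a)
   whose complement induces a proper divisible design graph
   (V, K, l1, l2; m, n) satisfies |C| = m, k = a n, lam = mu = a (n - a)
   and v = a (n^2 - 1) / (n - a).
   1. Spectrum: an eigenvalue b <> k satisfies b^2 = (lam - mu) b + (k - mu);
      applied to a and -a this gives lam = mu and a^2 = k - mu.
   2. Hoffman coclique: the numbers of neighbours in C of the vertices
      outside C have zero variance, so all equal sg = a.
   3. Divisible design: blocks see a common neighbourhood in C, different
      blocks share lam - l2 vertices of it; the two moment equations over the
      vertices outside one block force k = sg n, and counting the edges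
      leaving C gives |C| = m.
   4. The closed forms follow from k = sg^2 + mu and (v - 1) mu + k = k^2.
   Counting and algebraic facts come first, then the graph lemmas in nested
   sections, and the theorem last. *)

From mathcomp Require Import all_boot all_order all_algebra.
From mathcomp Require Import ring lra zify.
Import Order.TTheory GRing.Theory Num.Theory.

Set Implicit Arguments.
Unset Strict Implicit.
Unset Printing Implicit Defensive.

Section DoubleCounting.
Variable T : finType.

Lemma card_sepE (X Q : pred T) : #|[set x | X x && Q x]| = \sum_(x | X x) Q x.
Proof.
rewrite -sum1dep_card [RHS]big_mkcond [LHS]big_mkcond /=.
by apply: eq_bigr => x _; case: (X x); case: (Q x).
Qed.

Lemma double_count (X : pred T) (A : {set T}) (P : T -> T -> bool) :
  \sum_(x | X x) #|[set z in A | P x z]| = \sum_(z in A) #|[set x | X x && P x z]|.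
Proof.
under eq_bigr do rewrite card_sepE.
by rewrite exchange_big; apply: eq_bigr => z _; rewrite card_sepE.
Qed.

Lemma double_count_pairs (X : pred T) (A : {set T}) (P Q : T -> T -> bool) :
  \sum_(x | X x) #|[set z in A | P x z]| * #|[set w in A | Q x w]|
  = \sum_(z in A) \sum_(w in A) #|[set x | [&& X x, P x z & Q x w]]|.
Proof.
rewrite (eq_bigr (fun x => \sum_(z in A) \sum_(w in A) (P x z && Q x w : nat))).
  rewrite exchange_big; apply: eq_bigr => z _; rewrite exchange_big.
  by apply: eq_bigr => w _; rewrite card_sepE.
move=> x _; rewrite !card_sepE big_distrl; apply: eq_bigr => z _.
rewrite big_distrr; apply: eq_bigr => w _ /=; by case: (P x z); case: (Q x w).
Qed.

Lemma card_setD_add (A B : {set T}) : B \subset A -> #|A :\: B| + #|B| = #|A|.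
Proof. by move=> BA; rewrite cardsDS // subnK // subset_leq_card. Qed.

Lemma sum_diag_offdiag (V : nmodType) (A : {set T}) (f : T -> T -> V) (d o : V) :
  (forall z, z \in A -> f z z = d) ->
  (forall z w, z \in A -> w \in A -> z != w -> f z w = o) ->
  (\sum_(z in A) \sum_(w in A) f z w = d *+ #|A| + o *+ (#|A| * (#|A| - 1)))%R.
Proof.
move=> fdiag foff; rewrite mulnC mulrnA -mulrnDl -sumr_const; apply: eq_bigr => z zA.
rewrite (bigD1 z) //= fdiag //; congr (_ + _)%R.
rewrite (eq_bigr (fun=> o)) => [|w /andP [wA wz]]; last by rewrite foff // eq_sym.
rewrite (eq_bigl (mem (A :\ z))) => [|w]; last by rewrite !inE andbC.
by rewrite sumr_const (cardsD1 z A) zA add1n subn1.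
Qed.

End DoubleCounting.

Section Algebra.
Local Open Scope ring_scope.

(* Casting n (n - 1), which vanishes for n = 0 despite the truncated minus. *)
Lemma natr_mul_pred (R : pzRingType) (n : nat) :
  (n * (n - 1))%:R = n%:R * (n%:R - 1) :> R.
Proof. by case: n => [|n]; rewrite ?mul0r // subn1 natrM mulrSr addrK. Qed.

Lemma sum_sq_dev_eq0 (R : realDomainType) (I : finType) (A : {set I})
    (f : I -> R) (a : R) :
  \sum_(i in A) f i ^+ 2 - 2 * a * \sum_(i in A) f i + a ^+ 2 * #|A|%:R = 0 ->
  forall i, i \in A -> f i = a.
Proof.
have -> : \sum_(i in A) f i ^+ 2 - 2 * a * \sum_(i in A) f i + a ^+ 2 * #|A|%:R
    = \sum_(i in A) (f i - a) ^+ 2.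
  rewrite mulr_sumr -sumrN mulr_natr -sumr_const -!big_split /=.
  by apply: eq_bigr => i _; ring.
move=> dev0 i iA; apply/eqP; rewrite -subr_eq0 -sqrf_eq0; apply/eqP.
exact: (psumr_eq0P (fun j _ => sqr_ge0 (f j - a)) dev0).
Qed.

Lemma block_design_identity (R : comNzRingType) (c k n s mu V t : R) :
  (V - n) * t = s * (k - n) ->
  (V - n) * t ^+ 2 = s * (k - n) + s * (s - 1) * (mu - n) ->
  V * s = c * k -> (c - 1) * mu = k * (s - 1) ->
  s * k * (k - s * n) * (c - s) ^+ 2 = 0.
Proof.
move=> h1 h2 h3 h4.
have -> : s * k * (k - s * n) * (c - s) ^+ 2 =
  s * (c - 1) * (- (V - n) * ((V - n) * t ^+ 2 - (s * (k - n) + s * (s - 1) * (mu - n)))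
                 + ((V - n) * t - s * (k - n)) * ((V - n) * t + s * (k - n)))
  - (c - 1) * s * ((k - n) + (s - 1) * (mu - n)) * (V * s - c * k)
  - s * (c * k - s * n) * (s - 1) * ((c - 1) * mu - k * (s - 1)).
  by ring.
by rewrite h1 h2 h3 h4 !subrr; ring.
Qed.

Lemma order_closed_form (R : fieldType) (v k mu n s : R) :
  (v - 1) * mu + k = k * k -> k = s * n -> mu = s * (n - s) -> s != 0 -> n - s != 0 ->
  v = s * (n ^+ 2 - 1) / (n - s).
Proof.
move=> walks kE muE s0 ns0; apply: (canRL (mulfK ns0)); apply: (mulfI s0); apply/eqP.
rewrite -subr_eq0; rewrite muE kE in walks.
have -> : s * (v * (n - s)) - s * (s * (n ^+ 2 - 1))
  = (v - 1) * (s * (n - s)) + s * n - s * n * (s * n) by ring.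
by rewrite walks subrr.
Qed.

End Algebra.

Section SimpleGraph.
Variables (T : finType) (e : rel T).
Hypothesis He : simple_graph e.

Definition nbrs_in (A : {set T}) (x : T) : {set T} := [set z in A | e x z].

Lemma adj_sym x y : e x y = e y x.
Proof. by case: He => esym _; apply: esym. Qed.

Lemma adj_irr x : e x x = false.
Proof. by case: He => _ eirr; apply: eirr. Qed.

Lemma card_nbrs_split (A : {set T}) x :
  #|[set y | e x y]| = #|nbrs_in (~: A) x| + #|nbrs_in A x|.
Proof.
rewrite -(cardsID A [set y | e x y]) addnC.
by congr (_ + _); apply: eq_card => y; rewrite !inE andbC.
Qed.

Lemma common_nbrs_split (A : {set T}) x y :
  common_nbrs e setT x y = common_nbrs e (~: A) x y + #|nbrs_in A x :&: nbrs_in A y|.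
Proof.
rewrite /common_nbrs /nbrs_in -(cardsID A) addnC.
by congr (_ + _); apply: eq_card => z; rewrite !inE /=; case: (z \in A); rewrite ?andbF ?andbT.
Qed.

Section StronglyRegular.
Variables (v k lam mu : nat).
Hypothesis Hsrg : srg e v k lam mu.

Lemma srg_in_deg z : #|[set x | e x z]| = k.
Proof.
by case: Hsrg => _ hdeg _ _; rewrite -(hdeg z); apply: eq_card => x; rewrite !inE adj_sym.
Qed.

Lemma srg_common x y :
  x != y -> #|[set z | e x z && e y z]| = if e x y then lam else mu.
Proof.
case: Hsrg => _ _ hlam hmu xy; case exy: (e x y).
  by rewrite -(hlam x y xy exy); apply: eq_card => z; rewrite !inE.
by rewrite -(hmu x y xy (negbT exy)); apply: eq_card => z; rewrite !inE.
Qed.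

(* Counting walks of length two from a vertex x0: when lam = mu every
   vertex other than x0 is reached by mu of them. *)
Lemma srg_two_walks (x0 : T) : lam = mu -> ((v - 1) * mu + k = k * k)%N.
Proof.
case: Hsrg => hv hdeg _ _ lam_mu.
have := @double_count _ (e x0) setT e.
have -> : \sum_(y | e x0 y) #|[set z in setT | e y z]| = (k * k)%N.
  rewrite (eq_bigr (fun=> k)) => [|y _]; last first.
    by rewrite -(hdeg y); apply: eq_card => z; rewrite !inE.
  by rewrite sum_nat_const -(hdeg x0) cardsE.
move=> ->; rewrite (bigD1 x0) //= addnC; congr (_ + _).
  by rewrite -(hdeg x0); apply: eq_card => y; rewrite !inE adj_sym andbb.
rewrite (eq_bigr (fun=> mu)) => [|z /andP [_ zx0]]; last first.
  have := @srg_common x0 z; rewrite eq_sym zx0 lam_mu if_same => <- //.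
  by apply: eq_card => y; rewrite !inE (adj_sym y).
rewrite sum_nat_const; congr (_ * _).
by rewrite -hv subn1 -(cardC1 x0); apply: eq_card => z; rewrite !inE unfold_in /= in_setT.
Qed.

Lemma srg_two_walksR (R : pzRingType) (x0 : T) :
  lam = mu -> ((v%:R - 1) * mu%:R + k%:R = k%:R * k%:R :> R)%R.
Proof.
have v_pos : 0 < v by case: Hsrg => <- _ _ _; apply/card_gt0P; exists x0.
by move/(srg_two_walks x0)/(congr1 (GRing.natmul (1 : R))); rewrite natrD !natrM natrB.
Qed.

Section Spectrum.
Local Open Scope ring_scope.
Variable R : fieldType.
Local Notation A := (adj_mx e R).

Lemma adj_mxE i j : A i j = (e (enum_val i) (enum_val j))%:R.
Proof. by rewrite mxE. Qed.

Lemma sum_adj_mx_count (p : pred T) :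
  \sum_(j < #|T|) (p (enum_val j))%:R = #|[set y | p y]|%:R :> R.
Proof.
rewrite -(big_enum_val (fun y => (p y)%:R : R)) /= -sum1dep_card natr_sum.
by rewrite [RHS]big_mkcond; apply: eq_big => // y; case: (p y).
Qed.

Lemma adj_mx_row_sum i : \sum_j A i j = k%:R.
Proof.
case: Hsrg => _ hdeg _ _.
by under eq_bigr do rewrite adj_mxE; rewrite sum_adj_mx_count hdeg.
Qed.

(* The defining identity of a strongly regular graph,
   A^2 = k I + lam A + mu (J - I - A), read entrywise. *)
Lemma adj_mx_sqr i j :
  (A *m A) i j = mu%:R + (lam%:R - mu%:R) * A i j + (k%:R - mu%:R) * (i == j)%:R.
Proof.
rewrite mxE; under eq_bigr do rewrite !adj_mxE -natrM mulnb (adj_sym _ (enum_val j)).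
rewrite (sum_adj_mx_count (fun y => e (enum_val i) y && e (enum_val j) y)) adj_mxE.
have [<-|ij] := eqVneq i j.
  rewrite adj_irr mulr0 mulr1 addr0 addrC subrK.
  case: Hsrg => _ hdeg _ _; rewrite -(hdeg (enum_val i)); congr _%:R.
  by apply: eq_card => y; rewrite !inE andbb.
rewrite srg_common ?(inj_eq enum_val_inj) // mulr0 addr0.
by case: (e _ _); rewrite ?mulr1 ?mulr0 ?addr0 // addrC subrK.
Qed.

(* An eigenvector for an eigenvalue other than k is orthogonal to the
   all-ones vector, since every row of A sums to k. *)
Lemma eigenvector_sum0 (a : R) (u : 'rV_#|T|) :
  u *m A = a *: u -> a != k%:R -> \sum_j u 0 j = 0.
Proof.
move=> uA ak.
have : \sum_j (u *m A) 0 j = k%:R * \sum_j u 0 j.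
  under eq_bigr do rewrite mxE; rewrite exchange_big mulr_sumr /=.
  by apply: eq_bigr => i _; rewrite -mulr_sumr adj_mx_row_sum mulrC.
rewrite uA; under eq_bigr do rewrite mxE; rewrite -mulr_sumr => /eqP.
by rewrite -subr_eq0 -mulrBl mulf_eq0 subr_eq0 (negPf ak) => /eqP.
Qed.

(* Step 1: the quadratic relation satisfied by every eigenvalue other than k,
   read off at a nonzero coordinate of an eigenvector. *)
Lemma srg_eigenvalue (a : R) :
  eigenvalue A a -> a != k%:R -> a ^+ 2 = (lam%:R - mu%:R) * a + (k%:R - mu%:R).
Proof.
move=> /eigenvalueP [u uA u0] ak; have [j uj] := rV0Pn _ u0.
have uAj : \sum_i u 0 i * A i j = a * u 0 j.
  by have := congr1 (fun M : 'rV_#|T| => M 0 j) uA; rewrite !mxE.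
have : (u *m (A *m A)) 0 j = a ^+ 2 * u 0 j.
  by rewrite mulmxA uA -scalemxAl uA scalerA mxE expr2.
rewrite mxE (eq_bigr (fun i => mu%:R * u 0 i + (lam%:R - mu%:R) * (u 0 i * A i j)
    + (k%:R - mu%:R) * (u 0 i * (i == j)%:R))) => [|i _]; last by rewrite adj_mx_sqr; ring.
rewrite !big_split /= -!mulr_sumr (eigenvector_sum0 uA ak) uAj (bigD1 j) //= eqxx.
rewrite big1 => [|i /negPf ->]; last by rewrite mulr0.
move=> h; apply: (mulIf uj); rewrite -h mulr1 mulr0 !addr0 add0r; ring.
Qed.

End Spectrum.

Section SymmetricSpectrum.
Local Open Scope ring_scope.

Lemma srg_symmetric_spectrum (R : realFieldType) (a : R) :
  (forall b : R, eigenvalue (adj_mx e R) b <-> b \in [:: k%:R; a; - a]) ->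
  0 < a -> a < k%:R -> lam = mu /\ a ^+ 2 = k%:R - mu%:R.
Proof.
move=> Heig a_pos a_k.
have ha : a ^+ 2 = (lam%:R - mu%:R) * a + (k%:R - mu%:R).
  by apply: srg_eigenvalue; [apply/Heig; rewrite !inE eqxx orbT | rewrite lt_eqF].
have hna : (- a) ^+ 2 = (lam%:R - mu%:R) * (- a) + (k%:R - mu%:R).
  by apply: srg_eigenvalue; [apply/Heig; rewrite !inE eqxx !orbT | rewrite lt_eqF //; lra].
have lam_mu : lam%:R = mu%:R :> R.
  have : (lam%:R - mu%:R) * (a *+ 2) = a ^+ 2 - (- a) ^+ 2 by rewrite {1}ha hna; ring.
  rewrite sqrrN subrr => /eqP; rewrite mulf_eq0 mulrn_eq0 (gt_eqF a_pos) !orbF subr_eq0.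
  by move/eqP.
split; first by apply/eqP; rewrite -(eqr_nat R) lam_mu.
by rewrite ha lam_mu subrr mul0r add0r.
Qed.

End SymmetricSpectrum.

Section Coclique.
Variable C : {set T}.
Hypothesis HC : coclique e C.

Lemma coclique_nbr_out x z : z \in C -> e x z -> x \in ~: C.
Proof. by move=> zC exz; rewrite inE; apply: contraL exz => xC; apply: HC. Qed.

(* The first two moments of the numbers of neighbours in C of the vertices
   outside C: counting the edges leaving C, and the pairs of such edges
   with a common endpoint outside C. *)
Lemma sum_nbrs_coclique :
  \sum_(x in ~: C) #|nbrs_in C x| = (#|C| * k)%N.
Proof.
rewrite double_count (eq_bigr (fun=> k)) => [|z zC]; first by rewrite sum_nat_const.
rewrite -(srg_in_deg z); apply: eq_card => x; rewrite !inE.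
by case exz: (e x z); rewrite ?andbF // andbT -in_setC (coclique_nbr_out zC exz).
Qed.

Section CocliqueSquares.
Local Open Scope ring_scope.

Lemma sum_sq_nbrs_coclique (R : comNzRingType) :
  \sum_(x in ~: C) (#|nbrs_in C x|%:R ^+ 2 : R)
  = #|C|%:R * k%:R + #|C|%:R * (#|C|%:R - 1) * mu%:R.
Proof.
under eq_bigr do rewrite expr2 -natrM.
rewrite -natr_sum double_count_pairs natr_sum; under eq_bigr do rewrite natr_sum.
rewrite (@sum_diag_offdiag _ _ _ _ k%:R mu%:R) => [|z zC|z w zC wC zw].
- by rewrite -[k%:R *+ _]mulr_natl -[mu%:R *+ _]mulr_natl natr_mul_pred.
- rewrite -(srg_in_deg z); congr _%:R; apply: eq_card => x; rewrite !inE andbb.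
  by case exz: (e x z); rewrite ?andbF // andbT -in_setC (coclique_nbr_out zC exz).
have := @srg_common z w; rewrite zw (negPf (HC zC wC)) => <- //; congr _%:R.
apply: eq_card => x; rewrite !inE (adj_sym z) (adj_sym w).
by case exz: (e x z); rewrite ?andbF //= -in_setC (coclique_nbr_out zC exz).
Qed.

End CocliqueSquares.

(* A coclique attaining the Hoffman bound, in the case lam = mu and
   s^2 = k - mu of step 1 (s is the opposite of the least eigenvalue). *)
Section HoffmanBound.
Local Open Scope ring_scope.
Variables (R : realFieldType) (s : R) (x0 : T).
Hypotheses (s_pos : 0 < s) (lam_mu : lam = mu) (s_sq : s ^+ 2 = k%:R - mu%:R).
Hypothesis hoffman : #|C|%:R * (s + k%:R) = v%:R * s.

Lemma hoffman_mu : #|C|%:R * mu%:R = s * (k%:R - s).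
Proof.
have walks := srg_two_walksR R x0 lam_mu.
have ks : k%:R + s != 0 by rewrite gt_eqF // ltr_wpDl.
have : (k%:R + s) * (#|C|%:R * mu%:R - s * (k%:R - s)) = 0.
  have -> : (k%:R + s) * (#|C|%:R * mu%:R - s * (k%:R - s))
    = mu%:R * (#|C|%:R * (s + k%:R) - v%:R * s)
      + s * ((v%:R - 1) * mu%:R + k%:R - k%:R * k%:R) + s * (s ^+ 2 - (k%:R - mu%:R)).
    by ring.
  by rewrite hoffman walks s_sq !subrr; ring.
by move/eqP; rewrite mulf_eq0 (negPf ks) subr_eq0 => /eqP.
Qed.

(* Step 2: with equality in the Hoffman bound every vertex outside C has
   exactly s neighbours in C, since the variance of these numbers vanishes. *)
Lemma hoffman_regular x : x \in ~: C -> #|nbrs_in C x|%:R = s.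
Proof.
move=> xD; apply: (@sum_sq_dev_eq0 _ _ (~: C) (fun x => #|nbrs_in C x|%:R) s _ x xD).
have cv : (#|C| <= v)%N by case: Hsrg => <- _ _ _; apply: max_card.
have cardD : #|~: C| = (v - #|C|)%N by case: Hsrg => <- _ _ _; rewrite -(cardsC C) addKn.
rewrite sum_sq_nbrs_coclique -natr_sum sum_nbrs_coclique cardD natrM natrB //.
have -> : #|C|%:R * k%:R + #|C|%:R * (#|C|%:R - 1) * mu%:R - 2 * s * (#|C|%:R * k%:R)
    + s ^+ 2 * (v%:R - #|C|%:R)
  = - s * (#|C|%:R * (s + k%:R) - v%:R * s) + #|C|%:R * (#|C|%:R * mu%:R - s * (k%:R - s))
    - #|C|%:R * (s ^+ 2 - (k%:R - mu%:R)) :> R.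
  by ring.
by rewrite hoffman hoffman_mu s_sq !subrr; ring.
Qed.

Hypothesis x0D : x0 \in ~: C.
Local Notation sg := #|nbrs_in C x0|.

Lemma hoffman_coclique_structure :
  [/\ s = sg%:R, forall x, x \in ~: C -> #|nbrs_in C x| = sg,
      (sg * sg + mu = k)%N & (#|C| * mu + sg * sg = sg * k)%N].
Proof.
have s_sg : s = sg%:R by rewrite hoffman_regular.
have deg : (sg * sg + mu = k)%N.
  by apply/eqP; rewrite -(eqr_nat R) natrD natrM -s_sg -expr2 s_sq subrK.
split=> // [x xD|]; first by apply/eqP; rewrite -(eqr_nat R) !hoffman_regular.
apply/eqP; rewrite -(eqr_nat R) natrD !natrM -s_sg hoffman_mu.
by rewrite -deg natrD natrM -s_sg; apply/eqP; ring.
Qed.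

End HoffmanBound.

Section DivisibleDesign.
Variables (P : {set {set T}}) (n l1 l2 sg : nat) (x0 : T).
Hypotheses (HP : partition P (~: C)) (HPn : forall B, B \in P -> #|B| = n).
Hypothesis HPc : forall x y, x \in ~: C -> y \in ~: C -> x != y ->
  common_nbrs e (~: C) x y = (if pblock P x == pblock P y then l1 else l2).
Hypotheses (lam_mu : lam = mu) (lam_l1 : lam = l1 + sg).
Hypothesis Hreg : forall x, x \in ~: C -> #|nbrs_in C x| = sg.
Hypothesis x0D : x0 \in ~: C.

Local Notation S := (nbrs_in C).
Local Notation Q := (pblock P x0).
Local Notation Dm := (~: C :\: pblock P x0).

Lemma cover_P : cover P = ~: C.
Proof. exact: cover_partition. Qed.

Lemma block_x0_in_P : Q \in P.
Proof. by rewrite pblock_mem // cover_P. Qed.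

Lemma block_x0_sub : Q \subset ~: C.
Proof. exact: partitionS HP block_x0_in_P. Qed.

Lemma meet_nbrs x y : x != y -> common_nbrs e (~: C) x y + #|S x :&: S y| = lam.
Proof.
move=> xy; rewrite -common_nbrs_split; have := srg_common xy.
by rewrite lam_mu if_same => <-; apply: eq_card => z; rewrite !inE.
Qed.

Lemma same_block_nbrs x y :
  x \in ~: C -> y \in ~: C -> pblock P x = pblock P y -> S x = S y.
Proof.
move=> xD yD bxy; have [-> //|xy] := eqVneq x y.
have := meet_nbrs xy; rewrite HPc // bxy eqxx lam_l1 => /addnI meet.
have Sx : S x :&: S y = S x by apply/eqP; rewrite eqEcard subsetIl meet (Hreg xD) leqnn.
have Sy : S x :&: S y = S y by apply/eqP; rewrite eqEcard subsetIr meet (Hreg yD) leqnn.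
by rewrite -Sx Sy.
Qed.

Lemma other_block_meet y : y \in Dm -> #|S x0 :&: S y| + l2 = lam.
Proof.
case/setDP => yD yQ.
have x0y : x0 != y by apply: contraNneq yQ => <-; rewrite mem_pblock cover_P.
have := meet_nbrs x0y; rewrite HPc // addnC.
by case: eqP => // Qy; move: yQ; rewrite Qy mem_pblock cover_P yD.
Qed.

Lemma block_sub_nbrs z : z \in S x0 -> Q \subset [set y | e y z].
Proof.
move=> zS; apply/subsetP => y yQ; have yD := subsetP block_x0_sub y yQ.
have := zS; rewrite (@same_block_nbrs x0 y) // ?inE => [/andP [] //|].
by rewrite (def_pblock (partition_trivIset HP) block_x0_in_P yQ).
Qed.

Lemma card_off_block : #|Dm| + n = #|~: C|.
Proof. by rewrite -(HPn block_x0_in_P) card_setD_add // block_x0_sub. Qed.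

Lemma count_off_block (N : {set T}) :
  N \subset ~: C -> Q \subset N -> #|[set y in Dm | y \in N]| + n = #|N|.
Proof.
move=> ND QN; rewrite -(HPn block_x0_in_P) -(card_setD_add QN); congr (_ + _).
apply: eq_card => y; rewrite !inE.
case: (boolP (y \in N)) => [/(subsetP ND)|]; rewrite ?inE ?andbT ?andbF //.
by move=> ->; rewrite andbT.
Qed.

Lemma count_nbrs_off_block z : z \in S x0 -> #|[set y in Dm | e y z]| + n = k.
Proof.
move=> zS; have zC : z \in C by case/setIdP: zS.
rewrite -(srg_in_deg z) -(count_off_block (N := [set y | e y z])).
- by congr (_ + _); apply: eq_card => y; rewrite !inE.
- by apply/subsetP => y; rewrite inE; apply: coclique_nbr_out.
exact: block_sub_nbrs.
Qed.

Lemma count_common_off_block z w : z \in S x0 -> w \in S x0 -> z != w ->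
  #|[set y in Dm | e y z && e y w]| + n = mu.
Proof.
move=> zS wS zw; have zC : z \in C by case/setIdP: zS.
have wC : w \in C by case/setIdP: wS.
have common_zw : #|[set y | e y z && e y w]| = mu.
  have := srg_common zw; rewrite (negPf (HC zC wC)) => <-.
  by apply: eq_card => y; rewrite !inE (adj_sym z) (adj_sym w).
rewrite -common_zw -(count_off_block (N := [set y | e y z && e y w])).
- by congr (_ + _); apply: eq_card => y; rewrite !inE.
- by apply/subsetP => y; rewrite inE => /andP [/(coclique_nbr_out zC)].
apply/subsetP => y yQ; move: (subsetP (block_sub_nbrs zS) y yQ).
by move: (subsetP (block_sub_nbrs wS) y yQ); rewrite !inE => -> ->.
Qed.

Lemma meet_sep y : S x0 :&: S y = [set z in S x0 | e y z].
Proof. by apply/setP => z; rewrite !inE; case: (z \in C). Qed.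

Lemma block_size_pos : 0 < n.
Proof.
by rewrite -(HPn block_x0_in_P); apply/card_gt0P; exists x0; rewrite mem_pblock cover_P.
Qed.

Lemma off_block_nonempty : #|P| != 1 -> exists y, y \in Dm.
Proof.
move=> P1; apply/set0Pn; apply: contra P1 => /eqP Dm0.
have := card_off_block; rewrite Dm0 cards0 add0n (card_uniform_partition HPn HP).
by move/eqP; rewrite -{1}(mul1n n) eqn_pmul2r ?block_size_pos // eq_sym.
Qed.

(* If C had only sg vertices, every vertex outside C would be adjacent to
   all of C, and the two block parameters l1, l2 would coincide. *)
Lemma coclique_size_neq : l1 != l2 -> #|P| != 1 -> #|C| != sg.
Proof.
move=> l12 /off_block_nonempty [y yDm]; apply: contra l12 => /eqP csg.
have SC x : x \in ~: C -> S x = C.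
  move=> xD; apply/eqP; rewrite eqEcard (Hreg xD) csg leqnn andbT.
  by apply/subsetP => z /setIdP [].
have yD : y \in ~: C by case/setDP: yDm.
by move: (other_block_meet yDm); rewrite (SC _ x0D) (SC _ yD) setIid csg lam_l1; lia.
Qed.

Lemma edges_across : #|~: C| * sg = #|C| * k.
Proof.
rewrite -sum_nbrs_coclique -sum_nat_const.
by apply: eq_bigr => x xD; rewrite (Hreg xD).
Qed.

Section Moments.
Local Open Scope ring_scope.
Variable R : comNzRingType.

Lemma meet_off_block y : y \in Dm -> #|S x0 :&: S y|%:R = lam%:R - l2%:R :> R.
Proof. by move/other_block_meet => <-; rewrite natrD addrK. Qed.

Lemma card_off_blockR : #|Dm|%:R = #|~: C|%:R - n%:R :> R.
Proof. by rewrite -card_off_block natrD addrK. Qed.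

Lemma first_moment_off_block :
  (#|~: C|%:R - n%:R) * (lam%:R - l2%:R) = sg%:R * (k%:R - n%:R) :> R.
Proof.
have <- : \sum_(y in Dm) #|S x0 :&: S y|%:R = (#|~: C|%:R - n%:R) * (lam%:R - l2%:R) :> R.
  by rewrite (eq_bigr _ meet_off_block) sumr_const -[_ *+ #|Dm|]mulr_natl card_off_blockR.
under eq_bigr do rewrite meet_sep.
rewrite -natr_sum double_count natr_sum (eq_bigr (fun=> k%:R - n%:R)) => [|z zS].
  by rewrite sumr_const (Hreg x0D) mulr_natl.
by rewrite -(count_nbrs_off_block zS) natrD addrK.
Qed.

Lemma second_moment_off_block :
  (#|~: C|%:R - n%:R) * (lam%:R - l2%:R) ^+ 2
  = sg%:R * (k%:R - n%:R) + sg%:R * (sg%:R - 1) * (mu%:R - n%:R) :> R.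
Proof.
have <- : \sum_(y in Dm) #|S x0 :&: S y|%:R ^+ 2
    = (#|~: C|%:R - n%:R) * (lam%:R - l2%:R) ^+ 2 :> R.
  rewrite (eq_bigr (fun=> (lam%:R - l2%:R) ^+ 2)) => [|y /meet_off_block -> //].
  by rewrite sumr_const -[_ *+ #|Dm|]mulr_natl card_off_blockR.
under eq_bigr do rewrite meet_sep expr2 -natrM.
rewrite -natr_sum double_count_pairs natr_sum; under eq_bigr do rewrite natr_sum.
rewrite (sum_diag_offdiag (d := k%:R - n%:R) (o := mu%:R - n%:R)) => [|z zS|z w zS wS zw].
- by rewrite (Hreg x0D) -[_ *+ sg]mulr_natl -[_ *+ (sg * _)]mulr_natl natr_mul_pred.
- rewrite -(count_nbrs_off_block zS) natrD addrK; congr _%:R.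
  by apply: eq_card => y; rewrite !inE andbb.
by rewrite -(count_common_off_block zS wS zw) natrD addrK.
Qed.

End Moments.

Section Degree.
Hypotheses (sg_pos : 0 < sg) (Hk : sg * sg + mu = k).
Hypothesis Hcmu : #|C| * mu + sg * sg = sg * k.
Hypotheses (l12 : l1 != l2) (P1 : #|P| != 1).

Lemma degree_block_product : k = sg * n.
Proof.
pose c : int := #|C|%:R; pose s : int := sg%:R.
have Hk' : (s * s + mu%:R = k%:R)%R by rewrite -natrM -natrD Hk.
have Hcmu' : (c * mu%:R + s * s = s * k%:R)%R by rewrite -!natrM -natrD Hcmu.
have h3 : (#|~: C|%:R * s = c * k%:R)%R by rewrite -!natrM edges_across.
have h4 : ((c - 1) * mu%:R = k%:R * (s - 1))%R.
  have cmu : (c * mu%:R = s * k%:R - s * s)%R by rewrite -Hcmu' addrK.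
  by rewrite mulrBl cmu -Hk'; ring.
have s0 : s != 0%R by rewrite pnatr_eq0 -lt0n.
have k0 : (k%:R != 0 :> int)%R by rewrite pnatr_eq0 -Hk -lt0n addn_gt0 muln_gt0 sg_pos.
have cs : (c - s != 0)%R by rewrite subr_eq0 eqr_nat coclique_size_neq.
have := block_design_identity (first_moment_off_block int) (second_moment_off_block int) h3 h4.
move/eqP; rewrite !mulf_eq0 (negPf s0) (negPf k0) (negPf cs) /= orbF subr_eq0.
by rewrite -natrM eqr_nat => /eqP.
Qed.

(* Counting edges between C and its complement then identifies |C| with
   the number of blocks. *)
Lemma design_parameters : k = sg * n /\ #|C| = #|P|.
Proof.
split; first exact: degree_block_product.
apply/eqP; rewrite -(@eqn_pmul2r (n * sg)) ?muln_gt0 ?block_size_pos //.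
rewrite !mulnA -(card_uniform_partition HPn HP) edges_across.
by rewrite degree_block_product mulnA mulnAC.
Qed.

End Degree.

End DivisibleDesign.

End Coclique.
End StronglyRegular.
End SimpleGraph.

Local Open Scope ring_scope.

Theorem mainTheorem8 (R : rcfType) (T : finType) (e : rel T)
    (v k lam mu : nat) (r s : R) (C : {set T})
    (V K l1 l2 m n : nat) :
  simple_graph e ->
  srg e v k lam mu ->
  primitive e ->
  (forall a : R, eigenvalue (adj_mx e R) a <-> a \in [:: k%:R; r; s]) ->
  s < r -> r < k%:R ->
  coclique e C ->
  (#|C|%:R : R) = v%:R * s / (s - k%:R) ->
  is_proper_ddg e (~: C) V K l1 l2 m n ->
  r = Num.sqrt (K%:R - l1%:R) ->
  s = - Num.sqrt (K%:R - l1%:R) ->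
  [/\ #|C| = m,
      (v%:R : R) = (- s) * (n%:R ^+ 2 - 1) / (n%:R + s),
      (k%:R : R) = (- s) * n%:R,
      (lam%:R : R) = (- s) * (n%:R + s)
    & (mu%:R : R) = (- s) * (n%:R + s)].
Proof.
move=> Hsim Hsrg _ Heig s_r r_k HC Hc [Hddg m1 _ l12].
have [_ HK [x0 [_ [x0D _ _ _]]] _ [P [HP HPm HPn HPc]]] := Hddg.
set a := Num.sqrt _ => r_def s_def; subst r s; rewrite opprK.
have a_pos : 0 < a by lra.
have [lam_mu a_sq] := srg_symmetric_spectrum Hsim Hsrg Heig a_pos r_k.
have hoffman : #|C|%:R * (a + k%:R) = v%:R * a.
  by rewrite Hc; field; rewrite -opprD oppr_eq0 gt_eqF // ltr_wpDr.
have [a_sg Hreg Hk Hcmu] :=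
  hoffman_coclique_structure Hsim Hsrg HC a_pos lam_mu a_sq hoffman x0D.
set sg := #|nbrs_in e C x0| in a_sg Hreg Hk Hcmu.
(* The inner degree K = k - sg and a^2 = K - l1 give lam = l1 + sg. *)
have HKl1 : (sg * sg + l1 = K)%N.
  apply/eqP; rewrite -(eqr_nat R) natrD natrM -a_sg -expr2 /a sqr_sqrtr ?subrK //.
  by apply: ltW; rewrite -sqrtr_gt0.
have HKk : (K + sg = k)%N.
  by case: Hsrg => _ hdeg _ _; rewrite -(hdeg x0) (card_nbrs_split e C) HK.
have lam_l1 : lam = (l1 + sg)%N by lia.
have sg_pos : (0 < sg)%N by rewrite -(ltr0n R) -a_sg.
have P1 : #|P| != 1%N by rewrite HPm.
have [kn cm] := design_parameters Hsim Hsrg HC HP HPn HPc lam_mu lam_l1 Hreg x0D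
  sg_pos Hk Hcmu l12 P1.
have kE : k%:R = a * n%:R by rewrite kn natrM a_sg.
have muE : mu%:R = a * (n%:R - a) by rewrite mulrBr -kE -expr2 a_sq; ring.
have na : n%:R - a != 0.
  apply/eqP => na0; have : 0 < mu%:R :> R.
    by rewrite ltr0n -lam_mu lam_l1 addn_gt0 sg_pos orbT.
  by rewrite muE na0 mulr0 ltxx.
split.
- by rewrite cm HPm.
- have walks := srg_two_walksR Hsim Hsrg R x0 lam_mu.
  exact: order_closed_form walks kE muE (lt0r_neq0 a_pos) na.
- exact: kE.
- by rewrite lam_mu muE.
- exact: muE.
Qed.
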